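(* Let $G=(V,E)$ be a connected undirected graph on $n$ nodes with Laplacian $L$, let $\kappa_1,\dots,\kappa_n>0$, and let $D_\kappa=\mathrm{diag}(\kappa_1,\dots,\kappa_n)$. For $S\subseteq V$ let $D_S$ be the diagonal $0/1$ matrix with $(D_S)_{ii}=1$ iff $i\in S$, and set $Q_S=L+D_\kappa D_S$ (write $Q_v$ for $Q_{\{v\}}$). Define $f:2^V\to\mathbb{R}$ by $f(\emptyset)=0$ and $f(S)=C-\mathrm{tr}(Q_S^{-1})$ for $S\neq\emptyset$, where $C=2\max_{v\in V}\mathrm{tr}(Q_v^{-1})$. Then $f$ is submodular, i.e., for all $A,B\subseteq V$, $f(A)+f(B)\ge f(A\cup B)+f(A\cap B)$.
   Context: For nonempty $S$, the matrix $Q_S$ is positive definite, so $Q_S^{-1}$ exists. *)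

From HB Require Import structures.
From mathcomp Require Import all_boot all_order all_algebra.
Set Implicit Arguments. Unset Strict Implicit. Unset Printing Implicit Defensive.
Import Order.TTheory GRing.Theory Num.Theory.
Local Open Scope ring_scope.

Definition simple_graph n (e : rel 'I_n) : Prop :=
  symmetric e /\ irreflexive e.

Definition connected_graph n (e : rel 'I_n) : Prop :=
  forall i j : 'I_n, connect e i j.

Definition degree n (e : rel 'I_n) (i : 'I_n) : nat := #|[set j | e i j]|.

Definition laplacian (R : pzRingType) n (e : rel 'I_n) : 'M[R]_n :=
  \matrix_(i, j) (if i == j then (degree e i)%:R else - (e i j)%:R).

Definition diag_kappa (R : pzRingType) n (kappa : 'I_n -> R) : 'M[R]_n :=
  diag_mx (\row_i kappa i).

Definition diag_set (R : pzRingType) n (S : {set 'I_n}) : 'M[R]_n :=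
  diag_mx (\row_i (i \in S)%:R).

Definition QS (R : pzRingType) n (e : rel 'I_n) (kappa : 'I_n -> R)
  (S : {set 'I_n}) : 'M[R]_n :=
  laplacian R e + diag_kappa kappa *m diag_set R S.

(* C = 2 max_v tr(Q_v^{-1}); the max over the (finite) vertex set, with
   0 as neutral element (all traces are positive, and for n = 0 V is empty). *)
Definition Cconst (R : realFieldType) n (e : rel 'I_n) (kappa : 'I_n -> R) : R :=
  2 * \big[Num.max/0]_(v < n) \tr (invmx (QS e kappa [set v])).

Definition fobj (R : realFieldType) n (e : rel 'I_n) (kappa : 'I_n -> R)
  (S : {set 'I_n}) : R :=
  if S == set0 then 0
  else Cconst e kappa - \tr (invmx (QS e kappa S)).

From HB Require Import structures.
From mathcomp Require Import all_boot all_order all_algebra.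
From mathcomp Require Import lra.
Import Order.TTheory GRing.Theory Num.Theory.
Local Open Scope ring_scope.
Set Implicit Arguments. Unset Strict Implicit. Unset Printing Implicit Defensive.

(* For S nonempty, the
   minimum principle on the connected graph shows that a row vector u with
   u Q_S >= 0 is itself >= 0, so Q_S is invertible with an entrywise
   nonnegative inverse. With I = A :&: B, the matrices Q_A, Q_B and Q_{A :|: B}
   are Q_I plus nonnegative diagonal matrices a, b and a + b, and two
   applications of the resolvent identity write the second difference
   tr Q_I^-1 - tr Q_A^-1 - tr Q_B^-1 + tr Q_{A :|: B}^-1 as the trace of a sum
   of products of nonnegative matrices: this is submodularity when I is
   nonempty. When I is empty, f(I) = 0 and C absorbs tr Q_A^-1 + tr Q_B^-1,
   because tr Q_S^-1 decreases as S grows. *)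

Section LaplacianAction.
Variables (R : pzRingType) (n : nat) (e : rel 'I_n).
Hypotheses (e_sym : symmetric e) (e_irr : irreflexive e).

Lemma mul_row_laplacian (u : 'rV[R]_n) j :
  (u *m laplacian R e) 0 j = \sum_i (e i j)%:R * (u 0 j - u 0 i).
Proof.
have deg : (degree e j)%:R = \sum_i (e i j)%:R :> R.
  rewrite /degree -sum1_card natr_sum big_mkcond /=.
  by apply: eq_bigr => i _; rewrite inE e_sym; case: (e i j).
have L_ij i : laplacian R e i j = if i == j then (degree e j)%:R else - (e i j)%:R.
  by rewrite /laplacian mxE; case: eqP => // ->.
apply/esym; under eq_bigr do rewrite mulrBr.
rewrite sumrB [X in _ - X](bigD1 j) //= e_irr mul0r add0r -sumrN.
rewrite [RHS]mxE [RHS](bigD1 j) //= L_ij eqxx deg mulr_sumr.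
congr (_ + _); apply: eq_bigr => i; last first.
  by move/negbTE=> ij; rewrite L_ij ij mulrN mulr_natl mulr_natr.
by rewrite mulr_natl mulr_natr.
Qed.

End LaplacianAction.

Section MinimumPrinciple.
Variables (R : realDomainType) (n : nat) (e : rel 'I_n) (w : 'rV[R]_n) (s : 'I_n).
Hypotheses (e_sym : symmetric e) (e_irr : irreflexive e) (e_conn : connected_graph e).
Hypotheses (w_ge0 : w \is a mxOver Num.nneg) (ws_gt0 : 0 < w 0 s).

Local Notation M := (laplacian R e + diag_mx w).

Lemma mul_row_laplacian_diag (u : 'rV[R]_n) j :
  (u *m M) 0 j = \sum_i (e i j)%:R * (u 0 j - u 0 i) + w 0 j * u 0 j.
Proof. by rewrite mulmxDr mxE mul_row_laplacian // mul_mx_diag mxE mulrC. Qed.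

Lemma laplacian_diag_min_spread (u : 'rV[R]_n) x :
  u *m M \is a mxOver Num.nneg -> (forall i, u 0 x <= u 0 i) -> u 0 x < 0 ->
  w 0 x = 0 /\ forall y, e y x -> u 0 y = u 0 x.
Proof.
move=> /mxOverP/(_ 0 x); rewrite nnegrE mul_row_laplacian_diag => col x_min x_neg.
pose t i := (e i x)%:R * (u 0 i - u 0 x).
have t_ge0 i : 0 <= t i by rewrite mulr_ge0 ?ler0n ?subr_ge0.
have sum_t : \sum_i (e i x)%:R * (u 0 x - u 0 i) = - \sum_i t i.
  by rewrite -sumrN; apply: eq_bigr => i _; rewrite -mulrN opprB.
have sum_t_ge0 : 0 <= \sum_i t i by apply: sumr_ge0 => i _.
have wx_le0 : w 0 x * u 0 x <= 0.
  by rewrite mulr_ge0_le0 ?(ltW x_neg) // -nnegrE (mxOverP w_ge0).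
split.
  have : w 0 x * u 0 x = 0 by lra.
  by move/eqP; rewrite mulf_eq0 (negbTE (ltr0_neq0 x_neg)) orbF => /eqP.
move=> y eyx; have t_eq0 : \sum_i t i = 0 by lra.
have /(_ y isT) := psumr_eq0P (fun i _ => t_ge0 i) t_eq0.
by rewrite /t eyx mul1r => /eqP; rewrite subr_eq0 => /eqP.
Qed.

Lemma laplacian_diag_min_principle (u : 'rV[R]_n) :
  u *m M \is a mxOver Num.nneg -> u \is a mxOver Num.nneg.
Proof.
move=> Mu_ge0; apply/mxOverP => i0 j0; rewrite ord1 nnegrE leNgt; apply/negP => u_neg.
have [k _ k_min] := arg_minP (fun i => u 0 i) (isT : predT j0).
have k_neg : u 0 k < 0 := le_lt_trans (k_min j0 isT) u_neg.
have spread x : u 0 x = u 0 k -> w 0 x = 0 /\ forall y, e y x -> u 0 y = u 0 k.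
  move=> ux; have x_min i : u 0 x <= u 0 i by rewrite ux k_min.
  have x_neg : u 0 x < 0 by rewrite ux.
  have [wx0 nb] := laplacian_diag_min_spread Mu_ge0 x_min x_neg.
  by split=> // y /nb ->.
have min_closed : closed e [pred i | u 0 i == u 0 k].
  move=> x y exy; rewrite !inE; apply/eqP/eqP => /spread[_ nb]; apply: nb => //.
  by rewrite e_sym.
have := closed_connect min_closed (e_conn k s); rewrite !inE eqxx => /esym/eqP.
by move/spread=> [ws0 _]; move: ws_gt0; rewrite ws0 ltxx.
Qed.

End MinimumPrinciple.

Section GroundedLaplacianInverse.
Variables (R : realFieldType) (n : nat) (e : rel 'I_n) (w : 'rV[R]_n) (s : 'I_n).
Hypotheses (e_sym : symmetric e) (e_irr : irreflexive e) (e_conn : connected_graph e).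
Hypotheses (w_ge0 : w \is a mxOver Num.nneg) (ws_gt0 : 0 < w 0 s).

Local Notation M := (laplacian R e + diag_mx w).
Local Notation min_principle :=
  (laplacian_diag_min_principle e_sym e_irr e_conn w_ge0 ws_gt0).

Lemma laplacian_diag_unitmx : M \in unitmx.
Proof.
rewrite unitmxE unitfE; apply/negP => /det0P [v v_neq0 vM0].
have zero_nneg : (0 : 'rV[R]_n) \is a mxOver Num.nneg by rewrite mxOver0 ?rpred0.
have v_ge0 : v \is a mxOver Num.nneg by apply: min_principle; rewrite vM0.
have Nv_ge0 : - v \is a mxOver Num.nneg.
  by apply: min_principle; rewrite mulNmx vM0 oppr0.
case/negP: v_neq0; apply/eqP/rowP => j; apply/eqP; rewrite mxE eq_le.
have := mxOverP Nv_ge0 0 j; rewrite mxE nnegrE oppr_ge0 => ->.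
by rewrite -nnegrE (mxOverP v_ge0).
Qed.

Lemma invmx_laplacian_diag_nneg : invmx M \is a mxOver Num.nneg.
Proof.
apply/mxOverP => i j.
have row_ge0 : row i (invmx M) \is a mxOver Num.nneg.
  apply: min_principle; rewrite -row_mul mulVmx ?laplacian_diag_unitmx //.
  by apply/mxOverP => k l; rewrite !mxE nnegrE ler0n.
by have := mxOverP row_ge0 0 j; rewrite mxE.
Qed.

End GroundedLaplacianInverse.

Lemma mxtrace_nneg (R : numDomainType) n (A : 'M[R]_n) :
  A \is a mxOver Num.nneg -> 0 <= \tr A.
Proof. by move/mxOverP=> A_ge0; rewrite -nnegrE rpred_sum. Qed.

Section Resolvent.
Variables (R : comUnitRingType) (n : nat).
Implicit Types X a b : 'M[R]_n.

Lemma resolvent_identity X a : X \in unitmx -> X + a \in unitmx ->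
  invmx X - invmx (X + a) = invmx X *m a *m invmx (X + a).
Proof.
set Z := X + a => X_unit Z_unit.
have -> : a = Z - X by rewrite /Z addrAC subrr add0r.
by rewrite mulmxBr mulmxBl mulVmx // mul1mx -mulmxA mulmxV // mulmx1.
Qed.

Lemma invmx_second_difference X a b :
  X \in unitmx -> X + a \in unitmx -> X + b \in unitmx -> X + a + b \in unitmx ->
  invmx X - invmx (X + a) - (invmx (X + b) - invmx (X + a + b)) =
  invmx X *m b *m invmx (X + b) *m a *m invmx (X + a)
  + invmx (X + b) *m a *m invmx (X + a) *m b *m invmx (X + a + b).
Proof.
move=> X_unit Xa_unit Xb_unit Xab_unit.
have Xba_unit : X + b + a \in unitmx by rewrite addrAC.
rewrite resolvent_identity // -[X + a + b]addrAC resolvent_identity //.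
have -> : forall P Q Z W : 'M[R]_n, P *m a *m Z - Q *m a *m W =
    (P - Q) *m a *m Z + Q *m a *m (Z - W).
  by move=> P Q Z W; rewrite !mulmxBl mulmxBr addrA subrK.
by rewrite resolvent_identity // [X + b + a]addrAC resolvent_identity // !mulmxA.
Qed.
End Resolvent.

Section GroundedAtSets.
Variables (R : realFieldType) (n : nat) (e : rel 'I_n) (kappa : 'I_n -> R).
Hypotheses (e_sym : symmetric e) (e_irr : irreflexive e) (e_conn : connected_graph e).
Hypothesis kappa_gt0 : forall i, 0 < kappa i.
Implicit Types S T : {set 'I_n}.

Definition kappa_on (S : {set 'I_n}) : 'rV[R]_n := \row_i (kappa i * (i \in S)%:R).

Local Notation Q := (QS e kappa).

Lemma QS_diagE S : Q S = laplacian R e + diag_mx (kappa_on S).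
Proof.
rewrite /QS /diag_kappa /diag_set mulmx_diag.
by congr (_ + diag_mx _); apply/rowP => i; rewrite !mxE.
Qed.

Lemma kappa_on_nneg S : kappa_on S \is a mxOver Num.nneg.
Proof. by apply/mxOverP => i j; rewrite mxE nnegrE mulr_ge0 ?ler0n ?ltW. Qed.

Lemma diag_kappa_on_nneg S : diag_mx (kappa_on S) \is a mxOver Num.nneg.
Proof. by rewrite mxOver_diag ?rpred0 ?kappa_on_nneg. Qed.

Lemma QS_subset S T : S \subset T -> Q T = Q S + diag_mx (kappa_on (T :\: S)).
Proof.
move=> sST; rewrite !QS_diagE -addrA -raddfD /=; congr (_ + diag_mx _).
apply/rowP => i; rewrite !mxE inE -mulrDr -natrD.
by case: (boolP (i \in S)) => [/(subsetP sST) -> | _]; rewrite ?addn0.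
Qed.

Lemma QS_unitmx S : S != set0 -> Q S \in unitmx.
Proof.
case/set0Pn => s sS; rewrite QS_diagE.
by apply: (laplacian_diag_unitmx (s := s)); rewrite ?kappa_on_nneg // mxE sS mulr1.
Qed.

Lemma invmx_QS_nneg S : S != set0 -> invmx (Q S) \is a mxOver Num.nneg.
Proof.
case/set0Pn => s sS; rewrite QS_diagE.
by apply: (invmx_laplacian_diag_nneg (s := s)); rewrite ?kappa_on_nneg // mxE sS mulr1.
Qed.

Lemma mxtrace_invmx_QS_ge0 S : S != set0 -> 0 <= \tr (invmx (Q S)).
Proof. by move=> S_neq0; apply/mxtrace_nneg/invmx_QS_nneg. Qed.

Lemma mxtrace_invmx_QS_subset S T : S != set0 -> S \subset T ->
  \tr (invmx (Q T)) <= \tr (invmx (Q S)).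
Proof.
move=> S_neq0 sST; have T_neq0 := subset_neq0 sST S_neq0.
have := @resolvent_identity _ _ (Q S) (diag_mx (kappa_on (T :\: S))).
rewrite -(QS_subset sST) => /(_ (QS_unitmx S_neq0) (QS_unitmx T_neq0)) res.
rewrite -subr_ge0 -raddfB /= res; apply: mxtrace_nneg.
by rewrite !mxOverM ?invmx_QS_nneg ?diag_kappa_on_nneg.
Qed.

Lemma mxtrace_invmx_QS_le_max S : S != set0 ->
  \tr (invmx (Q S)) <= \big[Num.max/0]_(v < n) \tr (invmx (Q [set v])).
Proof.
case/set0Pn => s sS; apply: le_trans (le_bigmax _ _ s).
by apply: mxtrace_invmx_QS_subset; rewrite ?sub1set // -card_gt0 cards1.
Qed.

Lemma mxtrace_invmx_QS_supermodular A B : A :&: B != set0 ->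
  \tr (invmx (Q A)) + \tr (invmx (Q B))
  <= \tr (invmx (Q (A :|: B))) + \tr (invmx (Q (A :&: B))).
Proof.
move=> I_neq0.
have A_neq0 := subset_neq0 (subsetIl A B) I_neq0.
have B_neq0 := subset_neq0 (subsetIr A B) I_neq0.
have U_neq0 := subset_neq0 (subsetUl A B) A_neq0.
set a := diag_mx (kappa_on (A :\: B)); set b := diag_mx (kappa_on (B :\: A)).
have QA : Q A = Q (A :&: B) + a by rewrite (QS_subset (subsetIl A B)) setDIr setDv set0U.
have QB : Q B = Q (A :&: B) + b by rewrite (QS_subset (subsetIr A B)) setDIr setDv setU0.
have QU : Q (A :|: B) = Q (A :&: B) + a + b.
  by rewrite (QS_subset (subsetUl A B)) setDUl setDv set0U QA.
have := @invmx_second_difference _ _ (Q (A :&: B)) a b.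
rewrite -QU -QA -QB => /(_ (QS_unitmx I_neq0) (QS_unitmx A_neq0)).
move=> /(_ (QS_unitmx B_neq0) (QS_unitmx U_neq0)) diff2.
have : 0 <= \tr (invmx (Q (A :&: B)) - invmx (Q A) - (invmx (Q B) - invmx (Q (A :|: B)))).
  rewrite diff2 raddfD /=; apply: addr_ge0; apply: mxtrace_nneg;
  by rewrite !mxOverM ?invmx_QS_nneg ?diag_kappa_on_nneg.
rewrite !raddfB /=; lra.
Qed.

End GroundedAtSets.

Theorem theorem2 (R : realFieldType) (n : nat) (e : rel 'I_n)
  (kappa : 'I_n -> R) :
  simple_graph e -> connected_graph e ->
  (forall i, 0 < kappa i) ->
  forall A B : {set 'I_n},
    fobj e kappa (A :|: B) + fobj e kappa (A :&: B)
    <= fobj e kappa A + fobj e kappa B.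
Proof.
move=> [e_sym e_irr] e_conn kappa_gt0 A B.
have f0 : fobj e kappa set0 = 0 by rewrite /fobj eqxx.
have [-> | A_neq0] := eqVneq A set0; first by rewrite set0U set0I f0 addr0 add0r.
have [-> | B_neq0] := eqVneq B set0; first by rewrite setU0 setI0 f0 !addr0.
have U_neq0 := subset_neq0 (subsetUl A B) A_neq0.
rewrite /fobj (negbTE A_neq0) (negbTE B_neq0) (negbTE U_neq0).
have tr_le_max := mxtrace_invmx_QS_le_max e_sym e_irr e_conn kappa_gt0.
have tr_ge0 := mxtrace_invmx_QS_ge0 e_sym e_irr e_conn kappa_gt0.
case: ifPn => [_ | I_neq0]; last first.
  have := mxtrace_invmx_QS_supermodular e_sym e_irr e_conn kappa_gt0 I_neq0; lra.
have := tr_le_max _ A_neq0; have := tr_le_max _ B_neq0; have := tr_ge0 _ U_neq0.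
rewrite /Cconst; lra.
Qed.
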